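(* Let $2\le N\le 4$, $k=2$, $T=2$, and suppose $p_{11}<p_{01}$. Then for every initial belief vector $\omega(1)\in[0,1]^N$, the myopic sensing policy (with any tie-breaking) is optimal. That is, its expected total reward over the two slots equals the maximum expected total reward over the two slots achievable by any sensing policy.
   Context: Opportunistic spectrum access model. There are $N$ channels. The state $S_i(t)\in\{0,1\}$ of channel $i$ in slot $t$ (0 = busy, 1 = idle) evolves as a two-state discrete-time Markov chain with transition probabilities $p_{ij}=\Pr(S_i(t+1)=j\mid S_i(t)=i)$. The chains are independent across channels and all have the same transition probabilities $p_{01},p_{11}\in[0,1]$. The initial states are independent with $\Pr(S_i(1)=1)=\omega_i(1)$. In each slot $t=1,\dots,T$, a secondary user chooses a set $\mathcal{A}(t)$ of exactly $k$ channels to sense, based on past actions and observations. It observes the states of the sensed channels and obtains reward $1$ if at least one sensed channel is idle, and reward $0$ otherwise. The belief $\omega_i(t)$ is the conditional probability that $S_i(t)=1$ given past actions and observations. The expected immediate reward of action $\mathcal{A}(t)$ is $1-\prod_{i\in\mathcal{A}(t)}(1-\omega_i(t))$. Beliefs update as follows: $\omega_i(t+1)=p_{11}$ if $i\in\mathcal{A}(t)$ and $S_i(t)=1$; $\omega_i(t+1)=p_{01}$ if $i\in\mathcal{A}(t)$ and $S_i(t)=0$; and $\omega_i(t+1)=\tau(\omega_i(t))$ if $i\notin\mathcal{A}(t)$, where $\tau(\omega)=\omega p_{11}+(1-\omega)p_{01}$. A policy maps histories to actions. The objective is to maximize the expected total (equivalently, average) reward over slots $1,\dots,T$. The myopic sensing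 policy senses, in every slot, $k$ channels with the largest current beliefs $\omega_i(t)$, i.e. it maximizes the immediate expected reward. *)

From HB Require Import structures.
From mathcomp Require Import all_boot all_order all_algebra.
Set Implicit Arguments. Unset Strict Implicit. Unset Printing Implicit Defensive.
Import Order.TTheory GRing.Theory Num.Theory.
Local Open Scope ring_scope.

Section OSA.
Variables (R : realFieldType) (N : nat).

Definition tau (p01 p11 w : R) : R := w * p11 + (1 - w) * p01.

Definition exp_reward (b : 'I_N -> R) (A : {set 'I_N}) : R :=
  1 - \prod_(i in A) (1 - b i).

Definition obs (A : {set 'I_N}) (s : {ffun 'I_N -> bool}) : {ffun 'I_N -> bool} :=
  [ffun i => (i \in A) && s i].

Definition belief2 (p01 p11 : R) (w : 'I_N -> R) (A : {set 'I_N})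
  (o : {ffun 'I_N -> bool}) (i : 'I_N) : R :=
  if i \in A then (if o i then p11 else p01) else tau p01 p11 (w i).

Definition init_prob (w : 'I_N -> R) (s : {ffun 'I_N -> bool}) : R :=
  \prod_i (if s i then w i else 1 - w i).

(* A (deterministic) policy for horizon T = 2: a first action, and a
   second action as a function of the slot-1 observation. *)
Definition policy := ({set 'I_N} * ({ffun 'I_N -> bool} -> {set 'I_N}))%type.

Definition valid_policy (k : nat) (pol : policy) : Prop :=
  #|pol.1| = k /\ forall o, #|pol.2 o| = k.

Definition top_k (k : nat) (b : 'I_N -> R) (A : {set 'I_N}) : Prop :=
  #|A| = k /\ forall i j, i \in A -> j \notin A -> b j <= b i.

(* myopic policy with arbitrary tie-breaking *)
Definition is_myopic (k : nat) (p01 p11 : R) (w : 'I_N -> R) (pol : policy) : Prop :=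
  top_k k w pol.1 /\ forall o, top_k k (belief2 p01 p11 w pol.1 o) (pol.2 o).

Definition total_reward (p01 p11 : R) (w : 'I_N -> R) (pol : policy) : R :=
  exp_reward w pol.1 +
  \sum_(s : {ffun 'I_N -> bool})
     init_prob w s *
     exp_reward (belief2 p01 p11 w pol.1 (obs pol.1 s)) (pol.2 (obs pol.1 s)).

End OSA.

(* Slot 2 is the last slot, so a myopic second action is optimal there: a
   top-2 set of the slot-2 beliefs maximizes the immediate reward
   (top_k_max).  Hence the total reward of a policy whose first action is the
   pair {a, b} is at most, and with a myopic second action equal to, a
   "two-slot value" of the initial beliefs: the expectation over the four
   joint states of (a, b) (init_prob_marginal2) of the slot-2 reward of an
   explicitly known top pair (total_reward_value).  Negative correlation makes
   this pair easy to find: a channel seen busy has the largest slot-2 belief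
   p01, a channel seen idle the smallest one p11, and among unsensed channels
   the one with the smallest initial belief is the best.  For N = 3 and N = 4
   the two-slot value is an explicit function value3 / value4 of the initial
   beliefs (total_reward_three, total_reward_four), and an exchange inequality
   shows that sensing a channel of larger initial belief instead of a smaller
   one never decreases it (value3_exchange, value4_exchange); so a top-2 first
   action is best (best_first_pair3, best_first_pair4).  For N = 2 there is a
   single admissible action. *)

From Pilot Require Import Defs.
From HB Require Import structures.
From mathcomp Require Import all_boot all_order all_algebra.
From mathcomp Require Import ring lra zify.
Set Implicit Arguments. Unset Strict Implicit. Unset Printing Implicit Defensive.
Import Order.TTheory GRing.Theory Num.Theory.
Local Open Scope ring_scope.

Section Marginal.
Variables (R : realFieldType) (N : nat) (w : 'I_N -> R).

Definition bern (u : R) (x : bool) : R := if x then u else 1 - u.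

Lemma init_prob_joint2 (a b : 'I_N) (x y : bool) : a != b ->
  \sum_(s : {ffun 'I_N -> bool}) init_prob w s * ((s a == x) && (s b == y))%:R =
  bern (w a) x * bern (w b) y.
Proof.
move=> ab; have ba : b != a by rewrite eq_sym.
(* the indicator of (s a, s b) = (x, y) factorizes over channels *)
pose e (i : 'I_N) (j : bool) : R :=
  if i == a then (j == x)%:R else if i == b then (j == y)%:R else 1.
have e_prod (s : {ffun 'I_N -> bool}) :
    ((s a == x) && (s b == y))%:R = \prod_i e i (s i).
  rewrite (bigD1 a) // (bigD1 b) //= big1 => [|i /andP[/negPf ia /negPf ib]];
    last by rewrite /e ia ib.
  by rewrite /e eqxx (negPf ba) eqxx mulr1 -natrM mulnb.
under eq_bigr do rewrite e_prod -big_split.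
rewrite -(bigA_distr_bigA (fun i j => bern (w i) j * e i j)) /=.
rewrite (bigD1 a) // (bigD1 b) //= [X in _ * (_ * X)]big1 => [|i /andP[/negPf ia /negPf ib]];
  last by rewrite big_bool /e ia ib !mulr1 /bern /=; ring.
rewrite !big_bool /e eqxx (negPf ba) eqxx /bern mulr1; clear e_prod e.
by case: x; case: y; rewrite /= ?mulr1 ?mulr0 ?addr0 ?add0r.
Qed.

Lemma init_prob_marginal2 (a b : 'I_N) (g : bool -> bool -> R) : a != b ->
  \sum_(s : {ffun 'I_N -> bool}) init_prob w s * g (s a) (s b) =
  \sum_(x : bool) \sum_(y : bool) bern (w a) x * bern (w b) y * g x y.
Proof.
move=> ab.
transitivity (\sum_(s : {ffun 'I_N -> bool}) \sum_(x : bool) \sum_(y : bool)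
   init_prob w s * (((s a == x) && (s b == y))%:R * g x y)).
  apply: eq_bigr => s _; rewrite !big_bool.
  by case: (s a); case: (s b); rewrite /= ?mul1r ?mul0r ?mulr0 ?addr0 ?add0r.
rewrite exchange_big; apply: eq_bigr => x _; rewrite exchange_big; apply: eq_bigr => y _.
rewrite -(init_prob_joint2 x y ab) mulr_suml.
by apply: eq_bigr => s _; rewrite mulrA.
Qed.
End Marginal.

Section ChannelSets.
Variable N : nat.

Lemma in_pair (u v i : 'I_N) : i \in [set u; v] -> i = u \/ i = v.
Proof. by rewrite !inE => /orP[/eqP->|/eqP->]; [left|right]. Qed.

Lemma uniq_head2 (T : eqType) (x y : T) (s : seq T) : uniq [:: x, y & s] -> x != y.
Proof. by rewrite /= inE negb_or => /andP[/andP[]]. Qed.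

Lemma card_setC_pair (A : {set 'I_N}) : #|A| = 2 -> #|~: A| = (N - 2)%N.
Proof. by move=> cA; have := cardsC A; rewrite card_ord cA; lia. Qed.

Lemma pair_setT (A : {set 'I_N}) : N = 2%N -> #|A| = 2 -> A = setT.
Proof.
by move=> N2 cA; apply/eqP; rewrite eqEcard subsetT cardsT card_ord cA N2.
Qed.

Lemma pair_complement3 (A : {set 'I_N}) : N = 3%N -> #|A| = 2 ->
  exists a b c, [/\ uniq [:: a; b; c], A = [set a; b], ~: A = [set c]
                  & forall i, i = a \/ i = b \/ i = c].
Proof.
move=> N3 cA; have [a [b [ab eA]]] : exists a b, a != b /\ A = [set a; b].
  by apply/cards2P; rewrite cA.
have [c eC] : exists c, ~: A = [set c].
  by apply/cards1P; rewrite card_setC_pair // N3.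
have cA' : c \notin [set a; b] by rewrite -eA -in_setC eC set11.
exists a, b, c; split => //.
  by move: cA'; rewrite /= !inE !negb_or ab !(eq_sym c) => /andP[-> ->].
move=> i; case: (boolP (i \in A)) => [|iA]; first by rewrite eA => /in_pair[]; auto.
have : i \in ~: A by rewrite inE.
by rewrite eC inE => /eqP; auto.
Qed.

Lemma pair_complement4 (A : {set 'I_N}) : N = 4%N -> #|A| = 2 ->
  exists a b c d, [/\ uniq [:: a; b; c; d], A = [set a; b], ~: A = [set c; d]
                    & forall i, i = a \/ i = b \/ i = c \/ i = d].
Proof.
move=> N4 cA; have [a [b [ab eA]]] : exists a b, a != b /\ A = [set a; b].
  by apply/cards2P; rewrite cA.
have [c [d [cd eC]]] : exists c d, c != d /\ ~: A = [set c; d].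
  by apply/cards2P; rewrite card_setC_pair // N4.
have [cA' dA'] : c \notin [set a; b] /\ d \notin [set a; b].
  by rewrite -eA -!in_setC eC !inE !eqxx orbT.
exists a, b, c, d; split => //.
  move: cA' dA'; rewrite /= !inE !negb_or ab cd !(eq_sym c) !(eq_sym d).
  by move=> /andP[-> ->] /andP[-> ->].
move=> i; case: (boolP (i \in A)) => [|iA]; first by rewrite eA => /in_pair[]; auto.
have : i \in ~: A by rewrite inE.
by rewrite eC => /in_pair[]; auto.
Qed.

End ChannelSets.

Section PairSensing.
Variables (R : realFieldType) (N : nat).
Implicit Types (b : 'I_N -> R) (S T : {set 'I_N}).

Lemma exp_reward_pair b (u v : 'I_N) :
  u != v -> exp_reward b [set u; v] = 1 - (1 - b u) * (1 - b v).
Proof. by move=> uv; rewrite /exp_reward big_setU1 ?big_set1 // !inE. Qed.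

Lemma top_k_pair b (u v : 'I_N) : u != v ->
  (forall j, j != u -> j != v -> b j <= b u /\ b j <= b v) ->
  top_k 2 b [set u; v].
Proof.
move=> uv dom; split; first by rewrite cards2 uv.
move=> i j /in_pair iuv; rewrite !inE => /norP[ju jv].
by have [] := dom j ju jv; case: iuv => ->.
Qed.

Lemma top_k_max b S T : (forall i, b i <= 1) ->
  top_k 2 b T -> #|S| = 2 -> exp_reward b S <= exp_reward b T.
Proof.
move=> b1 [cT topT] cS.
have [t1 [t2 [t12 eT]]] : exists x y, x != y /\ T = [set x; y].
  by apply/cards2P; rewrite cT.
have [s1 [s2 [s12 ->]]] : exists x y, x != y /\ S = [set x; y].
  by apply/cards2P; rewrite cS.
subst T.
have dom i : i = t1 \/ i = t2 \/ (b i <= b t1 /\ b i <= b t2).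
  case: (boolP (i \in [set t1; t2])) => [/in_pair[->|->]|iT]; [by left|by right; left|].
  by right; right; split; apply: topT => //; rewrite !inE eqxx ?orbT.
rewrite !exp_reward_pair //.
have := b1 t1; have := b1 t2; have := b1 s1; have := b1 s2.
by case: (dom s1) => [E1|[E1|[? ?]]]; case: (dom s2) => [E2|[E2|[? ?]]];
  subst; rewrite ?eqxx // in s12 *; nra.
Qed.

Lemma top_pair_value b T S (v : R) : (forall i, b i <= 1) ->
  top_k 2 b T -> exp_reward b T = v -> #|S| = 2 ->
  exp_reward b S <= v /\ (top_k 2 b S -> exp_reward b S = v).
Proof.
move=> b1 topT <- cS; split; first exact: top_k_max.
move=> topS; apply/eqP; rewrite eq_le !top_k_max //; by case: topT.
Qed.

End PairSensing.

Section TwoSlots.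
Variables (R : realFieldType) (N : nat) (p01 p11 : R) (w : 'I_N -> R).
Hypotheses (p11_ge0 : 0 <= p11) (p11_le_p01 : p11 <= p01) (p01_le1 : p01 <= 1).
Hypothesis w_range : forall i, 0 <= w i <= 1.

Local Notation tau := (tau p01 p11).

Definition sensed_belief (x : bool) : R := if x then p11 else p01.

Lemma tau_between (u : R) : 0 <= u <= 1 -> p11 <= tau u <= p01.
Proof.
move=> /andP[u0 u1]; rewrite /Defs.tau.
have d0 : 0 <= p01 - p11 by rewrite subr_ge0.
have u1' : 0 <= 1 - u by rewrite subr_ge0.
have := mulr_ge0 u0 d0; have := mulr_ge0 u1' d0.
by move=> *; apply/andP; split; lra.
Qed.

Lemma tau_antitone (u v : R) : u <= v -> tau v <= tau u.
Proof.
move=> uv; rewrite /Defs.tau -subr_ge0.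
have -> : u * p11 + (1 - u) * p01 - (v * p11 + (1 - v) * p01) =
          (v - u) * (p01 - p11) by ring.
by apply: mulr_ge0; rewrite subr_ge0.
Qed.

Lemma belief2_le1 (A : {set 'I_N}) (o : {ffun 'I_N -> bool}) (i : 'I_N) :
  belief2 p01 p11 w A o i <= 1.
Proof.
have p11_le1 := le_trans p11_le_p01 p01_le1.
rewrite /belief2; case: (i \in A); first by case: (o i).
by have /andP[_ /le_trans->] := tau_between (w_range i).
Qed.

(* The state vector in which channel a is in state x and all others in y;
   for a sensed pair {a, b}, it carries all that the observation reveals. *)
Definition state_of (a : 'I_N) (x y : bool) : {ffun 'I_N -> bool} :=
  [ffun i => if i == a then x else y].

Lemma obs_pair (a b : 'I_N) (s : {ffun 'I_N -> bool}) :
  obs [set a; b] s = obs [set a; b] (state_of a (s a) (s b)).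
Proof.
apply/ffunP => i; rewrite !ffunE; case: (boolP (i \in _)) => //= /in_pair[->|->].
  by rewrite eqxx.
by case: eqP => [->|].
Qed.

Definition belief_after (pol : policy N) (s : {ffun 'I_N -> bool}) : 'I_N -> R :=
  belief2 p01 p11 w pol.1 (obs pol.1 s).

Definition second_reward (pol : policy N) (s : {ffun 'I_N -> bool}) : R :=
  exp_reward (belief_after pol s) (pol.2 (obs pol.1 s)).

(* Expected total reward of sensing a pair with idle probabilities wa, wb in
   slot 1 and then a best pair in slot 2, when g11 is the best slot-2 reward
   after both sensed channels were seen idle, and tm is the largest slot-2
   belief among unsensed channels (the best partner of a busy-seen channel). *)
Definition two_slot_value (wa wb g11 tm : R) : R :=
  1 - (1 - wa) * (1 - wb) +
  (wa * wb * g11 + (wa * (1 - wb) + (1 - wa) * wb) * (1 - (1 - p01) * (1 - tm))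
   + (1 - wa) * (1 - wb) * (1 - (1 - p01) * (1 - p01))).

Lemma two_slot_valueC (wa wb g11 tm : R) :
  two_slot_value wa wb g11 tm = two_slot_value wb wa g11 tm.
Proof. by rewrite /two_slot_value; ring. Qed.

Section SensedPair.
Variables (pol : policy N) (a b : 'I_N).
Hypotheses (ab : a != b) (pol1 : pol.1 = [set a; b]).

Lemma belief_after_fst (x y : bool) :
  belief_after pol (state_of a x y) a = sensed_belief x.
Proof. by rewrite /belief_after /belief2 /obs pol1 !ffunE !inE eqxx. Qed.

Lemma belief_after_snd (x y : bool) :
  belief_after pol (state_of a x y) b = sensed_belief y.
Proof.
by rewrite /belief_after /belief2 /obs pol1 !ffunE !inE eqxx orbT [b == a]eq_sym (negPf ab).
Qed.

Lemma belief_after_unsensed (x y : bool) (j : 'I_N) : j \notin pol.1 ->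
  belief_after pol (state_of a x y) j = tau (w j).
Proof. by move=> jA; rewrite /belief_after /belief2 (negPf jA). Qed.

Lemma unsensedP (j : 'I_N) : j != a -> j != b -> j \notin pol.1.
Proof. by rewrite pol1 !inE => /negPf-> /negPf->. Qed.

Lemma belief_after_between (x y : bool) (j : 'I_N) :
  p11 <= belief_after pol (state_of a x y) j <= p01.
Proof.
have p_range (z : bool) : p11 <= sensed_belief z <= p01.
  by case: z; rewrite /= lexx ?p11_le_p01.
have [->|ja] := eqVneq j a; first by rewrite belief_after_fst.
have [->|jb] := eqVneq j b; first by rewrite belief_after_snd.
by rewrite belief_after_unsensed ?unsensedP //; apply: tau_between.
Qed.

Lemma total_reward_pair : total_reward p01 p11 w pol =
  exp_reward w pol.1 + \sum_(x : bool) \sum_(y : bool)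
    bern (w a) x * bern (w b) y * second_reward pol (state_of a x y).
Proof.
rewrite /total_reward -init_prob_marginal2 //; congr (_ + _).
by apply: eq_bigr => s _; rewrite /second_reward /belief_after pol1 -obs_pair.
Qed.

Lemma total_reward_bound (G : bool -> bool -> R) :
  (forall o, #|pol.2 o| = 2) ->
  (forall x y, exists2 T, top_k 2 (belief_after pol (state_of a x y)) T &
     exp_reward (belief_after pol (state_of a x y)) T = G x y) ->
  let V := exp_reward w pol.1 +
    \sum_(x : bool) \sum_(y : bool) bern (w a) x * bern (w b) y * G x y in
  total_reward p01 p11 w pol <= V /\
  ((forall o, top_k 2 (belief2 p01 p11 w pol.1 o) (pol.2 o)) ->
     total_reward p01 p11 w pol = V).
Proof.
move=> card2 topG V.
have slot2 x y : second_reward pol (state_of a x y) <= G x y /\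
    (top_k 2 (belief_after pol (state_of a x y))
             (pol.2 (obs pol.1 (state_of a x y))) ->
     second_reward pol (state_of a x y) = G x y).
  have [T topT valT] := topG x y.
  exact: top_pair_value (fun i => belief2_le1 _ _ i) topT valT (card2 _).
have bern_ge0 x y : 0 <= bern (w a) x * bern (w b) y.
  have /andP[? ?] := w_range a; have /andP[? ?] := w_range b.
  by apply: mulr_ge0; rewrite /bern; case: x; case: y; lra.
rewrite /V total_reward_pair; split.
  rewrite lerD2l; apply: ler_sum => x _; apply: ler_sum => y _.
  by apply: ler_wpM2l => //; case: (slot2 x y).
move=> myopic2; congr (_ + _); apply: eq_bigr => x _; apply: eq_bigr => y _.
by rewrite (proj2 (slot2 x y) (myopic2 _)).
Qed.

(* Slot-2 analysis: whatever the observation, a top pair is known explicitly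
   except after both sensed channels were seen idle.  If m is an unsensed
   channel with the smallest initial belief, a busy-seen channel paired with m
   is a top pair, and two busy-seen channels form a top pair. *)
Lemma total_reward_value (m : 'I_N) (g11 : R) :
  (forall o, #|pol.2 o| = 2) ->
  m \notin pol.1 -> (forall j, j \notin pol.1 -> w m <= w j) ->
  (exists2 T, top_k 2 (belief_after pol (state_of a true true)) T &
     exp_reward (belief_after pol (state_of a true true)) T = g11) ->
  total_reward p01 p11 w pol <= two_slot_value (w a) (w b) g11 (tau (w m)) /\
  ((forall o, top_k 2 (belief2 p01 p11 w pol.1 o) (pol.2 o)) ->
     total_reward p01 p11 w pol = two_slot_value (w a) (w b) g11 (tau (w m))).
Proof.
move=> card2 mA m_min top11.
have [am bm] : a != m /\ b != m.
  by move: mA; rewrite pol1 !inE negb_or !(eq_sym m) => /andP[].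
have bnd x y j := belief_after_between x y j.
have [p11_le_tm _] := andP (tau_between (w_range m)).
have busy_m x y c : c != m -> belief_after pol (state_of a x y) c = p01 ->
    (forall j, j != c -> j != m -> j \in pol.1 ->
       belief_after pol (state_of a x y) j = p11) ->
    top_k 2 (belief_after pol (state_of a x y)) [set c; m].
  move=> cm bel_c sensed_idle; apply: top_k_pair => // j jc jm.
  rewrite bel_c (belief_after_unsensed _ _ mA); split; first by case/andP: (bnd x y j).
  case: (boolP (j \in pol.1)) => [jA|jA]; first by rewrite sensed_idle.
  by rewrite belief_after_unsensed //; apply/tau_antitone/m_min.
pose G x y := if x && y then g11
  else if x || y then 1 - (1 - p01) * (1 - tau (w m)) else 1 - (1 - p01) * (1 - p01).
have -> : two_slot_value (w a) (w b) g11 (tau (w m)) =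
    exp_reward w pol.1 + \sum_(x : bool) \sum_(y : bool) bern (w a) x * bern (w b) y * G x y.
  by rewrite pol1 exp_reward_pair // !big_bool /two_slot_value /bern /G /=; ring.
apply: total_reward_bound => // x y; rewrite /G.
case: x; case: y => /=; first exact: top11.
- exists [set b; m];
    last by rewrite exp_reward_pair // belief_after_snd (belief_after_unsensed _ _ mA).
  apply: busy_m => // [|j jb _]; first by rewrite belief_after_snd.
  by rewrite pol1 => /in_pair[->|/eqP]; [rewrite belief_after_fst|rewrite (negPf jb)].
- exists [set a; m];
    last by rewrite exp_reward_pair // belief_after_fst (belief_after_unsensed _ _ mA).
  apply: busy_m => // [|j ja _]; first by rewrite belief_after_fst.
  by rewrite pol1 => /in_pair[/eqP|->]; [rewrite (negPf ja)|rewrite belief_after_snd].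
- exists [set a; b]; last by rewrite exp_reward_pair // belief_after_fst belief_after_snd.
  apply: top_k_pair => // j ja jb.
  by rewrite belief_after_fst belief_after_snd /=; case/andP: (bnd false false j).
Qed.

(* Three channels: the unsensed channel c pairs with a in the idle-idle case. *)
Definition value3 (wa wb wc : R) : R :=
  two_slot_value wa wb (1 - (1 - p11) * (1 - tau wc)) (tau wc).

Lemma total_reward_three (c : 'I_N) :
  (forall o, #|pol.2 o| = 2) ->
  ~: pol.1 = [set c] ->
  total_reward p01 p11 w pol <= value3 (w a) (w b) (w c) /\
  ((forall o, top_k 2 (belief2 p01 p11 w pol.1 o) (pol.2 o)) ->
     total_reward p01 p11 w pol = value3 (w a) (w b) (w c)).
Proof.
move=> card2 compl.
have unsensed j : (j \notin pol.1) = (j == c) by rewrite -in_setC compl inE.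
have cA : c \notin pol.1 by rewrite unsensed.
have [ac bc] : a != c /\ b != c.
  by move: cA; rewrite pol1 !inE negb_or !(eq_sym c) => /andP[].
apply: total_reward_value => //; first by move=> j; rewrite unsensed => /eqP->.
exists [set a; c];
  last by rewrite exp_reward_pair // belief_after_fst (belief_after_unsensed _ _ cA).
apply: top_k_pair => // j ja jc.
have /in_pair[/eqP|->] : j \in [set a; b] by rewrite -pol1 -[_ \in _]negbK unsensed.
  by rewrite (negPf ja).
rewrite belief_after_snd belief_after_fst (belief_after_unsensed _ _ cA) /=.
by case/andP: (tau_between (w_range c)).
Qed.

(* Four channels: after both sensed channels were seen idle, the two unsensed
   channels c, d form the top pair; otherwise the best unsensed channel is the
   one with the smaller initial belief. *)
Definition value4 (wa wb wc wd : R) : R :=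
  two_slot_value wa wb (1 - (1 - tau wc) * (1 - tau wd)) (tau (Num.min wc wd)).

Lemma total_reward_four (c d : 'I_N) :
  (forall o, #|pol.2 o| = 2) ->
  c != d -> ~: pol.1 = [set c; d] ->
  total_reward p01 p11 w pol <= value4 (w a) (w b) (w c) (w d) /\
  ((forall o, top_k 2 (belief2 p01 p11 w pol.1 o) (pol.2 o)) ->
     total_reward p01 p11 w pol = value4 (w a) (w b) (w c) (w d)).
Proof.
move=> card2 cd compl.
have unsensed j : (j \notin pol.1) = (j \in [set c; d]) by rewrite -in_setC compl.
have [cA dA] : c \notin pol.1 /\ d \notin pol.1 by rewrite !unsensed !inE !eqxx orbT.
have [m m_cd min_m] : exists2 m, m \in [set c; d] & Num.min (w c) (w d) = w m.
  case: (leP (w c) (w d)) => [cd_le|/ltW dc_le]; [exists c | exists d];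
    by rewrite ?inE ?eqxx ?orbT // ?min_l ?min_r.
rewrite /value4 min_m; apply: total_reward_value => //; first by rewrite unsensed.
  by move=> j; rewrite unsensed -min_m => /in_pair[->|->]; rewrite ge_min lexx ?orbT.
exists [set c; d]; last by rewrite exp_reward_pair // !belief_after_unsensed.
apply: top_k_pair => // j jc jd.
have : j \in pol.1 by rewrite -[_ \in _]negbK unsensed !inE negb_or jc jd.
rewrite (belief_after_unsensed _ _ cA) (belief_after_unsensed _ _ dA) pol1.
case/andP: (tau_between (w_range c)) => ? _; case/andP: (tau_between (w_range d)) => ? _.
by case/in_pair=> ->; rewrite ?belief_after_fst ?belief_after_snd.
Qed.

End SensedPair.

Lemma value3C (wa wb wc : R) : value3 wa wb wc = value3 wb wa wc.
Proof. exact: two_slot_valueC. Qed.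

Lemma value4C (wa wb wc wd : R) : value4 wa wb wc wd = value4 wb wa wc wd.
Proof. exact: two_slot_valueC. Qed.

Lemma value4_unsensedC (wa wb wc wd : R) : value4 wa wb wc wd = value4 wa wb wd wc.
Proof. by rewrite /value4 minC mulrC. Qed.

Lemma value3_exchange (wa wb wc : R) :
  wa <= 1 -> wb <= wc -> value3 wa wb wc <= value3 wa wc wb.
Proof.
move=> wa1 wbc; rewrite -subr_ge0.
have -> : value3 wa wc wb - value3 wa wb wc = (wc - wb) * (1 - wa).
  by rewrite /value3 /two_slot_value /Defs.tau; ring.
by apply: mulr_ge0; rewrite subr_ge0.
Qed.

Lemma value4_exchange (wa wb wc wd : R) :
  0 <= wa <= 1 -> 0 <= wb <= 1 -> 0 <= wc <= 1 -> 0 <= wd <= 1 ->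
  wb <= wc -> value4 wa wb wc wd <= value4 wa wc wb wd.
Proof.
move=> /andP[wa0 wa1] /andP[wb0 wb1] /andP[_ wc1] /andP[wd0 wd1] wbc.
rewrite -subr_ge0.
(* every difference below is a combination of nonnegative terms in
   k = (1 - p01) (p01 - p11), which lies in [0, 1] *)
set k := (1 - p01) * (p01 - p11).
have k0 : 0 <= k by apply: mulr_ge0; rewrite subr_ge0.
have k1 : k <= 1.
  by move: (p11_ge0) (p11_le_p01) (p01_le1) => *; rewrite /k; nra.
have kw (u : R) : 0 <= u -> u <= 1 -> 0 <= 1 - k * u.
  move=> u0 u1; rewrite subr_ge0; have : k * u <= k * 1 by apply: ler_wpM2l.
  by rewrite mulr1 => /le_trans; apply.
case: (lerP wd wb) => [wdb|wbd].
  have -> : value4 wa wc wb wd - value4 wa wb wc wd = (wc - wb) * (1 - wa) * (1 - k * wd).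
    rewrite /value4 (min_r wdb) (min_r (le_trans wdb wbc)).
    by rewrite /two_slot_value /Defs.tau /k; ring.
  by rewrite !mulr_ge0 ?(kw _ wd0 wd1) // subr_ge0.
case: (lerP wd wc) => [wdc|wcd].
  have -> : value4 wa wc wb wd - value4 wa wb wc wd =
      (1 - wa) * ((wc - wd) * (1 - k * wb) + (wd - wb)) + wa * (k * (wd - wb) * (1 - wc)).
    rewrite /value4 (min_r wdc) (min_l (ltW wbd)).
    by rewrite /two_slot_value /Defs.tau /k; ring.
  apply: addr_ge0; apply: mulr_ge0; rewrite ?subr_ge0 //.
    by rewrite addr_ge0 ?mulr_ge0 ?(kw _ wb0 wb1) // subr_ge0 // ltW.
  by rewrite !mulr_ge0 // subr_ge0 // ltW.
have -> : value4 wa wc wb wd - value4 wa wb wc wd =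
    (1 - wa) * (wc - wb) + wa * (k * (wc - wb) * (1 - wd)).
  rewrite /value4 (min_l (ltW wcd)) (min_l (ltW (le_lt_trans wbc wcd))).
  by rewrite /two_slot_value /Defs.tau /k; ring.
by rewrite addr_ge0 ?mulr_ge0 // subr_ge0.
Qed.

Lemma best_first_pair3 (a1 a2 a3 x y z : 'I_N) :
  (forall i, i = a1 \/ i = a2 \/ i = a3) ->
  w a3 <= w a1 -> w a3 <= w a2 -> uniq [:: x; y; z] ->
  value3 (w x) (w y) (w z) <= value3 (w a1) (w a2) (w a3).
Proof.
move=> cover le31 le32.
have swap13 : value3 (w a1) (w a3) (w a2) <= value3 (w a1) (w a2) (w a3).
  by apply: value3_exchange => //; case/andP: (w_range a1).
have swap23 : value3 (w a2) (w a3) (w a1) <= value3 (w a1) (w a2) (w a3).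
  by rewrite [X in _ <= X]value3C; apply: value3_exchange => //; case/andP: (w_range a2).
case: (cover x) => [->|[->|->]]; case: (cover y) => [->|[->|->]];
  rewrite /= ?inE ?eqxx ?orbT //;
  case: (cover z) => [->|[->|->]]; rewrite ?inE ?eqxx ?orbT ?andbF //= => _;
  first [done | by rewrite [X in X <= _]value3C].
Qed.

Lemma best_first_pair4 (a1 a2 a3 a4 x y z t : 'I_N) :
  (forall i, i = a1 \/ i = a2 \/ i = a3 \/ i = a4) ->
  w a3 <= w a1 -> w a3 <= w a2 -> w a4 <= w a1 -> w a4 <= w a2 ->
  uniq [:: x; y; z; t] ->
  value4 (w x) (w y) (w z) (w t) <= value4 (w a1) (w a2) (w a3) (w a4).
Proof.
move=> cover le31 le32 le41 le42.
have swap13 : value4 (w a1) (w a3) (w a2) (w a4) <= value4 (w a1) (w a2) (w a3) (w a4).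
  exact: value4_exchange.
have swap14 : value4 (w a1) (w a4) (w a2) (w a3) <= value4 (w a1) (w a2) (w a3) (w a4).
  by rewrite [X in _ <= X]value4_unsensedC; apply: value4_exchange.
have swap23 : value4 (w a2) (w a3) (w a1) (w a4) <= value4 (w a1) (w a2) (w a3) (w a4).
  by rewrite [X in _ <= X]value4C; apply: value4_exchange.
have swap24 : value4 (w a2) (w a4) (w a1) (w a3) <= value4 (w a1) (w a2) (w a3) (w a4).
  by rewrite [X in _ <= X]value4C [X in _ <= X]value4_unsensedC; apply: value4_exchange.
have swap34 : value4 (w a3) (w a4) (w a1) (w a2) <= value4 (w a1) (w a2) (w a3) (w a4).
  apply: le_trans swap13.
  by rewrite [X in _ <= X]value4C [X in _ <= X]value4_unsensedC; apply: value4_exchange.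
case: (cover x) => [->|[->|[->|->]]]; case: (cover y) => [->|[->|[->|->]]];
  rewrite /= ?inE ?eqxx ?orbT //;
  case: (cover z) => [->|[->|[->|->]]]; rewrite ?inE ?eqxx ?orbT ?andbF //;
  case: (cover t) => [->|[->|[->|->]]]; rewrite ?inE ?eqxx ?orbT ?andbF //= => _;
  first [done | by rewrite [X in X <= _]value4C | by rewrite [X in X <= _]value4_unsensedC
        | by rewrite [X in X <= _]value4C [X in X <= _]value4_unsensedC].
Qed.





Lemma myopic_optimal2 (pol_m pol : policy N) : N = 2%N ->
  is_myopic 2 p01 p11 w pol_m -> valid_policy 2 pol ->
  total_reward p01 p11 w pol <= total_reward p01 p11 w pol_m.
Proof.
move=> N2 [[cM _] myopic2] [cP card2].
suff -> : total_reward p01 p11 w pol = total_reward p01 p11 w pol_m by [].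
rewrite /total_reward (pair_setT N2 cP) (pair_setT N2 cM); congr (_ + _).
by apply: eq_bigr => s _; rewrite (pair_setT N2 (card2 _)) (pair_setT N2 (myopic2 _).1).
Qed.

Lemma myopic_optimal3 (pol_m pol : policy N) : N = 3%N ->
  is_myopic 2 p01 p11 w pol_m -> valid_policy 2 pol ->
  total_reward p01 p11 w pol <= total_reward p01 p11 w pol_m.
Proof.
move=> N3 [[cM topM] myopic2] [cP card2].
have [a1 [a2 [a3 [uniqM eM cM' coverM]]]] := pair_complement3 N3 cM.
have [x [y [z [uniqP eP cP' _]]]] := pair_complement3 N3 cP.
have [_ value_m] := total_reward_three (uniq_head2 uniqM) eM (fun o => (myopic2 o).1) cM'.
have [le_pol _] := total_reward_three (uniq_head2 uniqP) eP card2 cP'.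
have a3M : a3 \notin pol_m.1 by rewrite -in_setC cM' set11.
rewrite (value_m myopic2); apply: (le_trans le_pol).
by apply: best_first_pair3 => //; apply: topM; rewrite // eM !inE eqxx ?orbT.
Qed.

Lemma myopic_optimal4 (pol_m pol : policy N) : N = 4%N ->
  is_myopic 2 p01 p11 w pol_m -> valid_policy 2 pol ->
  total_reward p01 p11 w pol <= total_reward p01 p11 w pol_m.
Proof.
move=> N4 [[cM topM] myopic2] [cP card2].
have [a1 [a2 [a3 [a4 [uniqM eM cM' coverM]]]]] := pair_complement4 N4 cM.
have [x [y [z [t [uniqP eP cP' _]]]]] := pair_complement4 N4 cP.
have [_ value_m] := total_reward_four (uniq_head2 uniqM) eM
  (fun o => (myopic2 o).1) (uniq_head2 (drop_uniq 2 uniqM)) cM'.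
have [le_pol _] := total_reward_four (uniq_head2 uniqP) eP card2
  (uniq_head2 (drop_uniq 2 uniqP)) cP'.
have [a3M a4M] : a3 \notin pol_m.1 /\ a4 \notin pol_m.1.
  by rewrite -!in_setC cM' !inE !eqxx orbT.
rewrite (value_m myopic2); apply: (le_trans le_pol).
by apply: best_first_pair4 => //; apply: topM; rewrite // eM !inE eqxx ?orbT.
Qed.
End TwoSlots.

Unset Implicit Arguments.

Theorem theorem2 (R : realFieldType) (N : nat) (p01 p11 : R) (w : 'I_N -> R)
  (pol_m : policy N) :
  (2 <= N <= 4)%N ->
  0 <= p01 <= 1 -> 0 <= p11 <= 1 -> p11 < p01 ->
  (forall i, 0 <= w i <= 1) ->
  is_myopic 2 p01 p11 w pol_m ->
  valid_policy 2 pol_m /\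
  (forall pol : policy N, valid_policy 2 pol ->
     total_reward p01 p11 w pol <= total_reward p01 p11 w pol_m).
Proof.
move=> N24 /andP[_ p01_le1] /andP[p11_ge0 _] /ltW p11_le_p01 w_range myopic.
split; first by case: myopic => [[cM _] myopic2]; split => // o; case: (myopic2 o).
move=> pol valid; have : N = 2%N \/ N = 3%N \/ N = 4%N by lia.
case=> [N2|[N3|N4]]; first exact: myopic_optimal2.
  exact: myopic_optimal3.
exact: myopic_optimal4.
Qed.
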